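(* Let $A\in\mathbb{C}^{m\times n}$, $B\in\mathbb{C}^{n\times p}$, $C\in\mathbb{C}^{p\times q}$ and $M=ABC$. For any $(AB)^{(1)}\in\{(AB)^{(1)}\}$ and $(BC)^{(1)}\in\{(BC)^{(1)}\}$, put $P=I_p-(AB)^{(1)}AB$ and $Q=I_n-BC(BC)^{(1)}$. Then for every $\{1\}$-generalized inverse $(QBP)^{(1)}$ of $QBP$, the matrix $$X=(BC)^{(1)}B(AB)^{(1)}-(BC)^{(1)}BP(QBP)^{(1)}QB(AB)^{(1)}$$ satisfies $MXM=M$.
   Context: For $X\in\mathbb{C}^{p\times q}$, a matrix $G\in\mathbb{C}^{q\times p}$ is called a $\{1\}$-generalized inverse of $X$ (written $X^{(1)}$) if $XGX=X$; $\{X^{(1)}\}$ denotes the set of all such $G$. $I_k$ is the $k\times k$ identity matrix. *)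

From HB Require Import structures.
From mathcomp Require Import all_boot all_order all_algebra.
Set Implicit Arguments. Unset Strict Implicit. Unset Printing Implicit Defensive.
Import GRing.Theory.
Local Open Scope ring_scope.

Definition is_g1inv (R : ringType) (p q : nat) (X : 'M[R]_(p, q)) (G : 'M[R]_(q, p)) : Prop :=
  X *m G *m X = X.

From HB Require Import structures.
From mathcomp Require Import all_boot all_order all_algebra.
Local Open Scope ring_scope.
Import GRing.Theory.

(* Since ABP = 0 and QBC = 0, and M Y M = A (I - Q) W (I - P) C whenever
   Y = (BC)^(1) W (AB)^(1), write X this way with W = B - BP (QBP)^(1) QB.
   Expanding, all cross terms vanish and what is left is
   M + A (QBP) C - A (QBP (QBP)^(1) QBP) C = M. *)

Lemma g1inv_mulmx_subr (R : nzRingType) (r s : nat) (X : 'M[R]_(r, s)) G :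
  is_g1inv X G -> X *m (1%:M - G *m X) = 0.
Proof. by move=> hX; rewrite mulmxBr mulmx1 mulmxA hX subrr. Qed.

Lemma g1inv_subl_mulmx (R : nzRingType) (r s : nat) (X : 'M[R]_(r, s)) G :
  is_g1inv X G -> (1%:M - X *m G) *m X = 0.
Proof. by move=> hX; rewrite mulmxBl mul1mx hX subrr. Qed.

Section ProductInverse.

Context {R : nzRingType} {m n p q : nat}.
Context {A : 'M[R]_(m, n)} {B : 'M[R]_(n, p)} {C : 'M[R]_(p, q)}.
Context {ABi : 'M[R]_(p, m)} {BCi : 'M[R]_(q, n)}.
Hypotheses (hAB : is_g1inv (A *m B) ABi) (hBC : is_g1inv (B *m C) BCi).

Let P : 'M[R]_p := 1%:M - ABi *m (A *m B).
Let Q : 'M[R]_n := 1%:M - B *m C *m BCi.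

Lemma mulmx_AB_P : A *m (B *m P) = 0.
Proof. by rewrite mulmxA g1inv_mulmx_subr. Qed.

Lemma mulmx_Q_BC : Q *m B *m C = 0.
Proof. by rewrite -mulmxA g1inv_subl_mulmx. Qed.

Lemma mulmx_A_subQ_BP : A *m ((1%:M - Q) *m B *m P) = - (A *m (Q *m B *m P)).
Proof.
by rewrite mulmxBl mul1mx mulmxBl mulmxBr -mulmxA mulmx_AB_P sub0r.
Qed.

Lemma mulmx_QB_subP_C : Q *m B *m (1%:M - P) *m C = - (Q *m B *m P *m C).
Proof. by rewrite mulmxBr mulmx1 mulmxBl mulmx_Q_BC sub0r. Qed.

Lemma g1inv_sandwich (W : 'M[R]_(n, p)) :
  A *m B *m C *m (BCi *m W *m ABi) *m (A *m B *m C)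
  = A *m ((1%:M - Q) *m W *m (1%:M - P)) *m C.
Proof.
have hQ : 1%:M - Q = B *m C *m BCi by rewrite /Q opprB addrC subrK.
have hP : 1%:M - P = ABi *m (A *m B) by rewrite /P opprB addrC subrK.
by rewrite hQ hP !mulmxA.
Qed.

Lemma sandwich_B :
  A *m ((1%:M - Q) *m B *m (1%:M - P)) *m C
  = A *m B *m C + A *m (Q *m B *m P) *m C.
Proof.
have hAQBC : A *m ((1%:M - Q) *m B) *m C = A *m B *m C.
  rewrite mulmxBl mul1mx mulmxBr mulmxBl -[A *m (Q *m B) *m C]mulmxA.
  by rewrite mulmx_Q_BC mulmx0 subr0.
rewrite mulmxBr mulmx1 mulmxBr mulmxBl hAQBC mulmx_A_subQ_BP.
by rewrite mulNmx opprK.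
Qed.

Lemma sandwich_BPGQB (G : 'M[R]_(p, n)) :
  A *m ((1%:M - Q) *m (B *m P *m G *m Q *m B) *m (1%:M - P)) *m C
  = A *m (Q *m B *m P *m G *m (Q *m B *m P)) *m C.
Proof.
have -> : A *m ((1%:M - Q) *m (B *m P *m G *m Q *m B) *m (1%:M - P)) *m C
        = A *m ((1%:M - Q) *m B *m P) *m G *m (Q *m B *m (1%:M - P) *m C).
  by rewrite !mulmxA.
by rewrite mulmx_A_subQ_BP mulmx_QB_subP_C !mulNmx mulmxN opprK !mulmxA.
Qed.

End ProductInverse.

Theorem theorem3p4 (F : fieldType) (m n p q : nat)
  (A : 'M[F]_(m, n)) (B : 'M[F]_(n, p)) (C : 'M[F]_(p, q))
  (ABi : 'M[F]_(p, m)) (BCi : 'M[F]_(q, n))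
  (hAB : is_g1inv (A *m B) ABi) (hBC : is_g1inv (B *m C) BCi)
  (QBPi : 'M[F]_(p, n))
  (hQBP : is_g1inv ((1%:M - B *m C *m BCi) *m B *m (1%:M - ABi *m (A *m B))) QBPi) :
  let M := A *m B *m C in
  let P := (1%:M - ABi *m (A *m B) : 'M[F]_p) in
  let Q := (1%:M - B *m C *m BCi : 'M[F]_n) in
  let X := BCi *m B *m ABi - BCi *m B *m P *m QBPi *m Q *m B *m ABi in
  M *m X *m M = M.
Proof.
move=> M P Q X.
have -> : X = BCi *m (B - B *m P *m QBPi *m Q *m B) *m ABi.
  by rewrite /X [in RHS]mulmxBr [in RHS]mulmxBl !mulmxA.
rewrite /M /P /Q g1inv_sandwich [_ *m (B - _)]mulmxBr [(_ *m B - _) *m _]mulmxBl.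
rewrite [A *m (_ - _)]mulmxBr [(_ - _) *m C]mulmxBl (sandwich_B hAB hBC).
by rewrite (sandwich_BPGQB hAB hBC QBPi) hQBP addrK.
Qed.
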